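(* If $\mathfrak M$ is a saturated structure of cardinality $\kappa$ with $\kappa=\kappa^\omega$, then $\mathfrak M$ has the homomorphism lifting property.
   Context: Signatures are relational (possibly with constants). An infinite $\mathfrak M$ is saturated if for every sequence of fewer than $|M|$ parameters, every set of first-order formulas in one free variable over these parameters consistent with the theory of $\mathfrak M$ with the parameters named is realised in $M$. $\mathfrak M$ has the homomorphism lifting property if for all $a_1,\dots,a_k\in M^\omega$ and $b_1,\dots,b_k\in M$ such that every pp-$(\tau\cup\{c_1,\dots,c_k\})$-sentence (existentially quantified conjunction of atoms) true in $(\mathfrak M^\omega;a_1,\dots,a_k)$ is true in $(\mathfrak M;b_1,\dots,b_k)$, there is a homomorphism $f:\mathfrak M^\omega\to\mathfrak M$ (direct power) with $f(a_i)=b_i$ for all $i$. *)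

From mathcomp Require Import all_boot.
Set Implicit Arguments.
Unset Strict Implicit.
Unset Printing Implicit Defensive.

Record signature := Signature {
  rsym : Type;
  arity : rsym -> nat;
  csym : Type
}.

Record structure (L : signature) (M : Type) := Structure {
  rinterp : forall R : rsym L, ('I_(arity R) -> M) -> Prop;
  cinterp : csym L -> M
}.

(** Terms of [L] extended by new constant symbols indexed by [C]
    (used both for parameters and for the constants c_1..c_k). *)
Inductive term (L : signature) (C : Type) :=
| TVar : nat -> term L C
| TConst : csym L -> term L C
| TParam : C -> term L C.

Inductive fml (L : signature) (C : Type) :=
| FRel (R : rsym L) : ('I_(arity R) -> term L C) -> fml L C
| FEq : term L C -> term L C -> fml L C
| FNot : fml L C -> fml L C
| FAnd : fml L C -> fml L C -> fml L C
| FEx : nat -> fml L C -> fml L C.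

Definition upd (M : Type) (e : nat -> M) (n : nat) (m : M) : nat -> M :=
  fun i => if i == n then m else e i.

Definition eval_term L C M (S : structure L M) (p : C -> M) (e : nat -> M)
  (t : term L C) : M :=
  match t with
  | TVar n => e n
  | TConst c => cinterp S c
  | TParam c => p c
  end.

Fixpoint sat L C M (S : structure L M) (p : C -> M) (e : nat -> M)
  (phi : fml L C) : Prop :=
  match phi with
  | FRel R args => rinterp S (fun i => eval_term S p e (args i))
  | FEq t1 t2 => eval_term S p e t1 = eval_term S p e t2
  | FNot psi => ~ sat S p e psi
  | FAnd psi1 psi2 => sat S p e psi1 /\ sat S p e psi2
  | FEx n psi => exists m, sat S p (upd e n m) psi
  end.

Definition term_fv L C (t : term L C) (n : nat) : Prop :=
  match t with TVar k => k = n | _ => False end.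

Fixpoint fv L C (phi : fml L C) (n : nat) : Prop :=
  match phi with
  | FRel R args => exists i, term_fv (args i) n
  | FEq t1 t2 => term_fv t1 n \/ term_fv t2 n
  | FNot psi => fv psi n
  | FAnd psi1 psi2 => fv psi1 n \/ fv psi2 n
  | FEx k psi => k <> n /\ fv psi n
  end.

Definition sentence L C (phi : fml L C) : Prop := forall n, ~ fv phi n.

Definition holds L C M (S : structure L M) (p : C -> M) (phi : fml L C) : Prop :=
  forall e : nat -> M, sat S p e phi.

Inductive atom_conj L C : fml L C -> Prop :=
| ac_rel R args : atom_conj (@FRel L C R args)
| ac_eq t1 t2 : atom_conj (FEq t1 t2)
| ac_and f1 f2 : atom_conj f1 -> atom_conj f2 -> atom_conj (FAnd f1 f2).

Inductive pp L C : fml L C -> Prop :=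
| pp_qf f : atom_conj f -> pp f
| pp_ex n f : pp f -> pp (FEx n f).

Fixpoint In_seq (T : Type) (x : T) (l : seq T) : Prop :=
  match l with [::] => False | y :: l' => y = x \/ In_seq x l' end.

Definition card_lt (I M : Type) : Prop :=
  (exists f : I -> M, injective f) /\ ~ (exists g : M -> I, injective g).

Definition infinite_type (M : Type) : Prop := exists f : nat -> M, injective f.

(** Saturation: M infinite, and for every family of fewer than |M|
    parameters, every set of formulas in the single free variable 0 over
    these parameters which is consistent with Th(M, parameters)
    (i.e. finitely satisfiable in M) is realised in M. *)
Definition saturated L M (S : structure L M) : Prop :=
  infinite_type M /\
  forall (I : Type) (p : I -> M) (Sigma : fml L I -> Prop),
    card_lt I M ->
    (forall phi, Sigma phi -> forall n, fv phi n -> n = 0) ->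
    (forall l : seq (fml L I), (forall phi, In_seq phi l -> Sigma phi) ->
       exists m : M, forall phi, In_seq phi l -> sat S p (fun _ => m) phi) ->
    exists m : M, forall phi, Sigma phi -> sat S p (fun _ => m) phi.

Definition power L M (S : structure L M) : structure L (nat -> M) :=
  {| rinterp := fun R (x : 'I_(arity R) -> nat -> M) =>
        forall j : nat, rinterp S (fun i => x i j);
     cinterp := fun c _ => cinterp S c |}.

Definition hom L A B (SA : structure L A) (SB : structure L B) (f : A -> B) : Prop :=
  (forall (R : rsym L) (x : 'I_(arity R) -> A), rinterp SA x -> rinterp SB (fun i => f (x i)))
  /\ (forall c : csym L, f (cinterp SA c) = cinterp SB c).

Definition hom_lifting L M (S : structure L M) : Prop :=
  forall (k : nat) (a : 'I_k -> nat -> M) (b : 'I_k -> M),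
    (forall phi : fml L 'I_k, pp phi -> sentence phi ->
       holds (power S) a phi -> holds S b phi) ->
    exists f : (nat -> M) -> M, hom (power S) S f /\ forall i, f (a i) = b i.

(* Well-order M and enumerate M^omega along the shortest initial segment of
   size |M| = |M^omega|, so that each element of M^omega is preceded by fewer
   than |M| others.  Define f by transfinite recursion along the enumeration,
   maintaining the invariant that every pp-formula over a and the elements
   enumerated so far that holds in M^omega also holds in M of their images:
   it holds initially by the hypothesis on a and b, survives limit stages
   because a formula mentions only finitely many parameters, and at a
   successor stage the pp-type of the next element over fewer than |M|
   parameters is finitely satisfiable in M by the invariant, hence realised
   by saturation.  Atoms being pp-formulas, f is a homomorphism. *)

From mathcomp Require Import all_boot boolp wochoice.
From Stdlib Require Import ClassicalEpsilon.
Set Implicit Arguments.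
Unset Strict Implicit.
Unset Printing Implicit Defensive.

Lemma In_seq_cat (T : Type) (x : T) l1 l2 :
  In_seq x (l1 ++ l2) <-> In_seq x l1 \/ In_seq x l2.
Proof. by elim: l1 => [|y l IH] /=; [tauto|rewrite IH; tauto]. Qed.

Lemma In_seq_map (T U : Type) (f : T -> U) y l :
  In_seq y (map f l) <-> exists2 x, In_seq x l & y = f x.
Proof.
elim: l => [|x l IH] /=; first by split=> // -[].
rewrite IH; split=> [[<-|[z]]|[z [<-|]]]; eauto.
Qed.

Lemma In_seq_pmap (T U : Type) (f : T -> option U) y l :
  In_seq y (pmap f l) <-> exists2 x, In_seq x l & f x = Some y.
Proof.
elim: l => [|x l IH] /=; first by split=> // -[].
case Ex: (f x) => [z|] /=; rewrite IH.
- by split=> [[<-|[w]]|[w [<-|]]]; eauto; rewrite Ex => -[]; left.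
- by split=> [[w]|[w [<-|]]]; eauto; rewrite Ex.
Qed.

Lemma In_seq_mem (T : eqType) (x : T) l : In_seq x l <-> x \in l.
Proof.
elim: l => [|y l IH] //=; rewrite in_cons; split.
- by case=> [->|/IH->]; rewrite ?eqxx ?orbT.
- by case/orP=> [/eqP->|/IH]; auto.
Qed.

Lemma In_seq_iota i s n : In_seq i (iota s n) <-> s <= i < s + n.
Proof. by rewrite In_seq_mem mem_iota. Qed.

Section Syntax.
Variable L : signature.

Fixpoint map_terms (C C' : Type) (s : term L C -> term L C') (phi : fml L C) :
  fml L C' :=
  match phi with
  | FRel R args => FRel (fun i => s (args i))
  | FEq t1 t2 => FEq (s t1) (s t2)
  | FNot psi => FNot (map_terms s psi)
  | FAnd psi1 psi2 => FAnd (map_terms s psi1) (map_terms s psi2)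
  | FEx n psi => FEx n (map_terms s psi)
  end.

Fixpoint terms (C : Type) (phi : fml L C) : seq (term L C) :=
  match phi with
  | FRel R args => map args (enum 'I_(arity R))
  | FEq t1 t2 => [:: t1; t2]
  | FAnd psi1 psi2 => terms psi1 ++ terms psi2
  | _ => [::]
  end.

Definition param_of (C : Type) (t : term L C) : option C :=
  if t is TParam c then Some c else None.

Definition params (C : Type) (phi : fml L C) : seq C := pmap (@param_of C) (terms phi).

Definition var_bound (C : Type) (phi : fml L C) : nat :=
  foldr (fun t n => if t is TVar v then maxn n v.+1 else n) 0 (terms phi).

Definition map_param (C C' : Type) (h : C -> C') (t : term L C) : term L C' :=
  match t with
  | TVar v => TVar L C' v
  | TConst c => TConst C' c
  | TParam c => TParam L (h c)
  end.

Definition shift_var (C : Type) (n : nat) (t : term L C) : term L C :=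
  if t is TVar v then TVar L C (v + n) else t.

Definition var0_of_none (C : Type) (t : term L (option C)) : term L C :=
  match t with
  | TVar v => TVar L C v.+1
  | TConst c => TConst C c
  | TParam None => TVar L C 0
  | TParam (Some c) => TParam L c
  end.

Definition ex_close (C : Type) (vs : seq nat) (phi : fml L C) : fml L C :=
  foldr (@FEx L C) phi vs.

Definition close_from (C : Type) (s : nat) (phi : fml L C) : fml L C :=
  ex_close (iota s (var_bound phi)) phi.

(* The formula in the free variable 0 expressing the existential closure of
   [th] with the parameter [None] read as that variable. *)
Definition pp_type_formula (C : Type) (th : fml L (option C)) : fml L C :=
  close_from 1 (map_terms (@var0_of_none C) th).

Definition conj_apart (C : Type) (th1 th2 : fml L C) : fml L C :=
  FAnd th1 (map_terms (shift_var (var_bound th1)) th2).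

Implicit Types C : Type.

Lemma In_params C c (phi : fml L C) :
  In_seq c (params phi) <-> In_seq (TParam L c) (terms phi).
Proof.
rewrite In_seq_pmap; split=> [[t Ht]|]; last by exists (TParam L c).
by case: t Ht => //= c' Ht [<-].
Qed.

Lemma In_terms_rel C (R : rsym L) (args : 'I_(arity R) -> term L C) i :
  In_seq (args i) (terms (FRel args)).
Proof. by apply/In_seq_map; exists i => //; apply/In_seq_mem; rewrite mem_enum. Qed.

Lemma var_bound_spec C v (phi : fml L C) :
  In_seq (TVar L C v) (terms phi) -> v < var_bound phi.
Proof.
rewrite /var_bound; elim: (terms phi) => [|t l IH] //= [->|/IH].
  by rewrite leq_max ltnSn orbT.
by case: t => [w|_|_] //; rewrite leq_max => ->.
Qed.

Lemma fv_atom_conj C (phi : fml L C) v :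
  atom_conj phi -> fv phi v -> In_seq (TVar L C v) (terms phi).
Proof.
elim=> [R args|t1 t2|f1 f2 _ IH1 _ IH2] /=.
- by case=> i; case E: (args i) => [w|//|//] /= <-; rewrite -E; apply: In_terms_rel.
- by case; [case: t1 => // w <-; left|case: t2 => // w <-; right; left].
- by rewrite In_seq_cat; case=> [/IH1|/IH2]; auto.
Qed.

Lemma atom_conj_map_terms C C' (s : term L C -> term L C') (phi : fml L C) :
  atom_conj phi -> atom_conj (map_terms s phi).
Proof. by elim=> *; constructor. Qed.

Lemma terms_map_terms C C' (s : term L C -> term L C') (phi : fml L C) :
  atom_conj phi -> terms (map_terms s phi) = map s (terms phi).
Proof.
by elim=> [R args|t1 t2|f1 f2 _ IH1 _ IH2] //=; rewrite ?IH1 ?IH2 ?map_cat -?map_comp.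
Qed.

Lemma map_terms_preimage C C' (s : term L C -> term L C') (phi : fml L C') :
  atom_conj phi -> (forall t, In_seq t (terms phi) -> exists t0, s t0 = t) ->
  exists2 phi0, atom_conj phi0 & map_terms s phi0 = phi.
Proof.
elim=> [R args|t1 t2|f1 f2 _ IH1 _ IH2] Hs.
- have /(_ _)/cid Hargs i : exists t0, s t0 = args i by apply: Hs; apply: In_terms_rel.
  exists (FRel (fun i => sval (Hargs i))); first by constructor.
  by congr FRel; apply: funext => i; case: (Hargs i).
- have [u1 <-] := Hs t1 (or_introl erefl).
  have [u2 <-] := Hs t2 (or_intror (or_introl erefl)).
  by exists (FEq u1 u2); first constructor.
- have [g1 Hg1 <-] : exists2 g, atom_conj g & map_terms s g = f1.
    by apply: IH1 => t Ht; apply: Hs; apply/In_seq_cat; left.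
  have [g2 Hg2 <-] : exists2 g, atom_conj g & map_terms s g = f2.
    by apply: IH2 => t Ht; apply: Hs; apply/In_seq_cat; right.
  by exists (FAnd g1 g2); first constructor.
Qed.

Lemma map_terms_id C (phi : fml L C) : map_terms id phi = phi.
Proof. by elim: phi => //= [? -> | ? -> ? -> | ? ? ->]. Qed.

Lemma fv_ex_close C vs (phi : fml L C) v :
  fv (ex_close vs phi) v -> fv phi v /\ ~ In_seq v vs.
Proof.
elim: vs => [|w vs IH] /=; first by split.
by case=> wv /IH[? ?]; split=> // -[].
Qed.

Lemma pp_ex_close C vs (phi : fml L C) : atom_conj phi -> pp (ex_close vs phi).
Proof. by move=> Hphi; elim: vs => [|w vs IH]; constructor. Qed.

Lemma fv_close_from C s (phi : fml L C) v :
  atom_conj phi -> fv (close_from s phi) v -> v < s.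
Proof.
move=> Hphi /fv_ex_close[/(fv_atom_conj Hphi)/var_bound_spec Hv]; rewrite In_seq_iota.
by move=> Hnot; rewrite ltnNge; apply/negP => sv; apply: Hnot; rewrite sv ltn_addl.
Qed.

Lemma fv_pp_type_formula C (th : fml L (option C)) v :
  atom_conj th -> fv (pp_type_formula th) v -> v = 0.
Proof. by move=> Hth /(fv_close_from (atom_conj_map_terms _ Hth)); case: v. Qed.

Section Semantics.
Variables (M : Type) (S : structure L M).

Lemma sat_map_terms C C' (s : term L C -> term L C') p e p' e' (phi : fml L C) :
  atom_conj phi ->
  (forall t, In_seq t (terms phi) -> eval_term S p' e' (s t) = eval_term S p e t) ->
  sat S p' e' (map_terms s phi) <-> sat S p e phi.
Proof.
elim=> [R args|t1 t2|f1 f2 _ IH1 _ IH2] Hs /=.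
- suff -> : (fun i => eval_term S p' e' (s (args i))) = (fun i => eval_term S p e (args i)).
    by [].
  by apply: funext => i; apply: Hs; apply: In_terms_rel.
- by rewrite !Hs //=; auto.
- by rewrite IH1 ?IH2 // => t Ht; apply: Hs; apply/In_seq_cat; auto.
Qed.

Lemma sat_eq_vars C p e e' (phi : fml L C) : atom_conj phi ->
  (forall v, In_seq (TVar L C v) (terms phi) -> e' v = e v) ->
  sat S p e' phi <-> sat S p e phi.
Proof.
move=> Hphi He; rewrite -{1}(map_terms_id phi).
by apply: sat_map_terms => // -[v|c|c] //= /He.
Qed.

Lemma sat_ex_close C p vs e (phi : fml L C) :
  sat S p e (ex_close vs phi) <->
  exists2 eps, (forall i, ~ In_seq i vs -> eps i = e i) & sat S p eps phi.
Proof.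
elim: vs e => [|v vs IH] e /=.
  split=> [|[eps He]]; first by exists e.
  by rewrite (_ : eps = e) //; apply: funext => i; apply: He.
split=> [[m /IH[eps He Heps]]|[eps He Heps]].
  exists eps => // i Hi; rewrite He; last by auto.
  by rewrite /upd; case: eqP => // iv; case: Hi; left.
exists (eps v); apply/IH; exists eps => // i Hi.
rewrite /upd; case: eqP => [->//|iv].
by apply: He => -[vi|]; [apply: iv|apply: Hi].
Qed.

Lemma sat_close_from C p s e (phi : fml L C) : atom_conj phi ->
  sat S p e (close_from s phi) <->
  exists2 eps, (forall i, i < s -> eps i = e i) & sat S p eps phi.
Proof.
move=> Hphi; rewrite sat_ex_close.
split=> [[eps He Heps]|[eps He Heps]].
  by exists eps => // i Hi; apply: He; rewrite In_seq_iota leqNgt Hi.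
exists (fun i => if s <= i < s + var_bound phi then eps i else e i).
  by move=> i; rewrite In_seq_iota; case: ifP.
rewrite (sat_eq_vars _ (e := eps) Hphi) // => v /var_bound_spec Hv.
by rewrite ltn_addl // andbT; case: leqP => // /He.
Qed.

Lemma sat_map_param C C' (h : C -> C') p p' e (phi : fml L C) :
  atom_conj phi -> (forall c, p' (h c) = p c) ->
  sat S p' e (map_terms (map_param h) phi) <-> sat S p e phi.
Proof. by move=> Hphi Hh; apply: sat_map_terms => // -[v|k|c] /=. Qed.

Lemma sat_var0_of_none C p e (th : fml L (option C)) : atom_conj th ->
  sat S p e (map_terms (@var0_of_none C) th) <-> sat S (oapp p (e 0)) (e \o succn) th.
Proof. by move=> Hth; apply: sat_map_terms => // -[v|c|[c|]]. Qed.

Lemma sat_shift_var C p n e (phi : fml L C) : atom_conj phi ->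
  sat S p e (map_terms (shift_var n) phi) <-> sat S p (fun v => e (v + n)) phi.
Proof. by move=> Hphi; apply: sat_map_terms => // -[v|c|c]. Qed.

Lemma sat_conj_apart C p (th1 th2 : fml L C) : atom_conj th1 -> atom_conj th2 ->
  (exists eps, sat S p eps (conj_apart th1 th2)) <->
  (exists eps, sat S p eps th1) /\ (exists eps, sat S p eps th2).
Proof.
move=> Hth1 Hth2; rewrite /conj_apart; set n := var_bound th1.
split=> [[eps /= [H1]]|[[eps1 H1] [eps2 H2]]].
  by rewrite sat_shift_var // => H2; split; eexists; eauto.
exists (fun v => if v < n then eps1 v else eps2 (v - n)); split.
  by rewrite (sat_eq_vars _ (e := eps1) Hth1) // => v /var_bound_spec ->.
rewrite sat_shift_var // (sat_eq_vars _ (e := eps2) Hth2) // => v _.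
by rewrite ltnNge leq_addl addnK.
Qed.

Lemma sat_pp_type_formula C q m (th : fml L (option C)) : atom_conj th ->
  sat S q (fun _ => m) (pp_type_formula th) <-> exists eps, sat S (oapp q m) eps th.
Proof.
move=> Hth; rewrite sat_close_from; last exact: atom_conj_map_terms.
split=> [[eps He]|[eps Heps]].
  by rewrite sat_var0_of_none // He //; exists (eps \o succn).
exists (fun v => if v is v'.+1 then eps v' else m) => [[]//|].
by rewrite sat_var0_of_none.
Qed.

End Semantics.
End Syntax.

Lemma sig_inj (T : Type) (P : T -> Prop) : injective (@proj1_sig T P).
Proof. by move=> [x Px] [y Py] /= xy; apply: eq_exist. Qed.

Section Cardinality.
Variable M : Type.

Lemma card_lt_inj (X Y : Type) :
  card_lt Y M -> (exists h : X -> Y, injective h) -> card_lt X M.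
Proof.
move=> [[f f_inj] noYM] [h h_inj]; split; first by exists (f \o h) => x y /f_inj/h_inj.
by move=> [g g_inj]; apply: noYM; exists (h \o g) => x y /h_inj/g_inj.
Qed.

(* Hilbert's hotel: an injection of [M] into itself avoiding [u 0]. *)
Definition shift_along (u : nat -> M) (m : M) : M :=
  if pselect (exists n, u n = m) is left Hm then u (sval (cid Hm)).+1 else m.

Variable u : nat -> M.
Hypothesis u_inj : injective u.

Lemma shift_along_inj : injective (shift_along u).
Proof.
move=> x y; rewrite /shift_along.
case: pselect => [Hx|Hx]; case: pselect => [Hy|Hy] //.
- move=> /u_inj[E]; apply: etrans (esym (svalP (cid Hx))) _.
  by rewrite E; exact: (svalP (cid Hy)).
- by move=> xy; case: Hy; exists (sval (cid Hx)).+1.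
- by move=> xy; case: Hx; exists (sval (cid Hy)).+1.
Qed.

Lemma shift_along_neq0 m : shift_along u m <> u 0.
Proof.
by rewrite /shift_along; case: pselect => [Hm /u_inj//|Hm m0]; apply: Hm; exists 0.
Qed.

(* [g \o shift_along u] misses [g (u 0)], so the one point it may send to
   [None] can go to the value carried by [g (u 0)]. *)
Lemma injective_drop_option (A : Type) (g : M -> option A) :
  injective g -> exists f : M -> A, injective f.
Proof.
move=> g_inj; pose g' := g \o shift_along u.
have g'_neq0 m : g' m <> g (u 0) by move/g_inj/shift_along_neq0.
have [a0 Ha0] : exists a0, g (u 0) = None \/ g (u 0) = Some a0.
  case E: (g (u 0)) => [a|]; first by exists a; right.
  by case E': (g' (u 0)) => [a|]; [exists a; left|case: (g'_neq0 (u 0)); rewrite E E'].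
have g'_inj : injective g' by move=> x y /g_inj/shift_along_inj.
exists (fun m => if g' m is Some a then a else a0) => x y.
case Ex: (g' x) => [ax|]; case Ey: (g' y) => [ay|].
- by move=> axy; apply: g'_inj; rewrite Ex Ey axy.
- move=> axa0; case: Ha0 => Ha0; first by case: (g'_neq0 y); rewrite Ey Ha0.
  by case: (g'_neq0 x); rewrite Ex Ha0 axa0.
- move=> a0ay; case: Ha0 => Ha0; first by case: (g'_neq0 x); rewrite Ex Ha0.
  by case: (g'_neq0 y); rewrite Ey Ha0 a0ay.
- by move=> _; apply: g'_inj; rewrite Ex Ey.
Qed.

Lemma card_lt_option (A : Type) : card_lt A M -> card_lt (option A) M.
Proof.
move=> [[h h_inj] noAM]; split.
  exists (fun o => if o is Some a then shift_along u (h a) else u 0).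
  move=> [x|] [y|] //=; first by move/shift_along_inj/h_inj->.
    by move/shift_along_neq0.
  by move/esym/shift_along_neq0.
by move=> [g /injective_drop_option].
Qed.

End Cardinality.

Lemma card_lt_ord_sum (M A : Type) (k : nat) :
  infinite_type M -> card_lt A M -> card_lt ('I_k + A) M.
Proof.
move=> [u u_inj] HA; elim: k => [|k IH].
  apply: card_lt_inj (card_lt_option u_inj HA) _.
  by exists (fun c => if c is inr x then Some x else None) => -[[]|x] // [[]|y] // [->].
apply: card_lt_inj (card_lt_option u_inj IH) _.
exists (fun c => match c with
  | inl i => if unlift ord_max i is Some j then Some (inl j) else None
  | inr x => Some (inr x) end).
move=> [i|x] [j|y] //=.
- by case: unliftP => [i' ->|->]; case: unliftP => [j' ->|->] // [->].
- by case: unliftP.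
- by case: unliftP.
- by case=> ->.
Qed.

Definition strict (T : Type) (R : T -> T -> Prop) (y x : T) : Prop := R y x /\ y <> x.

Lemma well_order_exists (T : Type) : exists R : T -> T -> Prop,
  [/\ forall x y, R x y \/ R y x,
      forall x y, R x y -> R y x -> x = y,
      forall x y z, R x y -> R y z -> R x z &
      forall P : T -> Prop, (exists x, P x) -> exists2 z, P z & forall x, P x -> R z x].
Proof.
have [R R_wo] := well_ordering_principle {classic T}.
have R_chain : wo_chain R predT by move=> A _; apply: R_wo.
have R_least (P : T -> Prop) : (exists x, P x) -> exists2 z, P z & forall x, P x -> R z x.
  move=> [x Px]; have [|z [[/asboolP Pz Rz] _]] := R_wo [pred y | `[< P y >]].
    by exists x; apply/asboolP.
  by exists z => // y Py; apply: Rz; apply/asboolP.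
have R_anti x y : R x y -> R y x -> x = y.
  by move=> Rxy Ryx; apply: (wo_chain_antisymmetric R_chain); rewrite ?Rxy.
exists (fun x y => R x y); split => //.
- by move=> x y; case/orP: (wo_chainW R_chain (isT : x \in predT) (isT : y \in predT)); auto.
- move=> x y z Rxy Ryz.
  have [w + Rw] := R_least (fun w => w = x \/ w = y \/ w = z) (ex_intro _ x (or_introl erefl)).
  case=> [|[|]] wE; subst w; first by apply: Rw; auto.
  + by rewrite (R_anti x y Rxy (Rw x (or_introl erefl))).
  + by rewrite -(R_anti y z Ryz (Rw y (or_intror (or_introl erefl)))).
Qed.

Section InitialSegment.
Variables (T : Type) (R : T -> T -> Prop).
Hypotheses (R_antisym : forall x y, R x y -> R y x -> x = y)
  (R_trans : forall x y z, R x y -> R y z -> R x z)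
  (R_least : forall P : T -> Prop, (exists x, P x) -> exists2 z, P z & forall x, P x -> R z x).

(* The least initial segment of [R] of cardinality [|T|], or all of [T] if
   every proper initial segment is smaller. *)
Lemma initial_segment_of_full_size : exists D : T -> Prop,
  [/\ forall x y, D x -> R y x -> D y,
      exists s : T -> T, forall t, exists2 y, D y & s y = t &
      forall x, D x -> card_lt {y | strict R y x} T].
Proof.
have sval_inj x : injective (@sval T (strict R ^~ x)) by apply: sig_inj.
case: (EM (exists x, exists j : T -> {y | strict R y x}, injective j)) => [big|small].
  have [x0 [j j_inj] x0_least] := R_least big.
  exists (strict R ^~ x0); split.
  - move=> x y [Rxx0 xx0] Ryx; split; first exact: R_trans _ _ _ Ryx Rxx0.
    by move=> yx0; apply: xx0; apply: R_antisym _ _ Rxx0 _; rewrite -yx0.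
  - exists (fun y => if pselect (exists t, sval (j t) = y) is left Hy then sval (cid Hy) else y).
    move=> t; exists (sval (j t)); first exact: svalP (j t).
    case: pselect => [Hy|[]]; last by exists t.
    by apply/j_inj/sval_inj; exact: svalP (cid Hy).
  - move=> x [Rxx0 xx0]; split; first by exists sval.
    by move=> jx; apply: xx0; apply: R_antisym _ _ Rxx0 (x0_least x _).
exists (fun _ => True); split=> //; first by exists id; move=> t; exists t.
by move=> x _; split; [exists sval|move=> jx; apply: small; exists x].
Qed.

End InitialSegment.

Definition sumf (A B T : Type) (f : A -> T) (g : B -> T) (c : A + B) : T :=
  match c with inl x => f x | inr y => g y end.

Definition inl_or (A E : Type) (U : E -> Prop) (c : A + E) : Prop :=
  if c is inr y then U y else True.

Lemma seq_has_max (E : Type) (R : E -> E -> Prop) (l : seq E) :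
  (forall x y, R x y \/ R y x) -> (forall x y z, R x y -> R y z -> R x z) ->
  (exists y, In_seq y l) -> exists2 y0, In_seq y0 l & forall y, In_seq y l -> R y y0.
Proof.
move=> R_total R_trans; elim: l => [|x l IH] [y Hy] //.
have R_refl z : R z z by case: (R_total z z).
case: (EM (exists y, In_seq y l)) => [/IH[y0 Hy0 Hl]|Hl].
  case: (R_total x y0) => Rxy0.
    by exists y0 => [|z [<-|/Hl//]]; [right|].
  by exists x => [|z [<-|/Hl Rzy0]]; [left| |apply: R_trans Rzy0 Rxy0].
by exists x => [|z [<-|Hz]]; [left| |case: Hl; exists z].
Qed.

Lemma saturated_inhabited (L : signature) (M : Type) (S : structure L M) :
  saturated S -> inhabited M.
Proof. by case=> -[u _] _; exact: inhabits (u 0). Qed.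

Section PPTransfer.
Variables (L : signature) (M : Type) (S : structure L M).

(* A pp-formula is given by its matrix [th], a conjunction of atoms; that it
   holds means [exists eps, sat _ _ eps th]. *)
Definition pp_transfer_on (C : Type) (U : C -> Prop) (p : C -> nat -> M) (q : C -> M) :=
  forall th : fml L C, atom_conj th -> (forall c, In_seq c (params th) -> U c) ->
  (exists eps, sat (power S) p eps th) -> exists eps, sat S q eps th.

Definition pp_transfer (C : Type) (p : C -> nat -> M) (q : C -> M) :=
  pp_transfer_on (fun _ => True) p q.

Lemma params_map_param (C C' : Type) (h : C -> C') (th : fml L C) c :
  atom_conj th -> In_seq c (params (map_terms (map_param h) th)) -> exists c0, h c0 = c.
Proof.
move=> Hth; rewrite In_params terms_map_terms // => /In_seq_map[[v|k|c0] _] //=.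
by case=> ->; exists c0.
Qed.

Lemma pp_transfer_comp (C C' : Type) (h : C -> C') (U : C' -> Prop) p q p0 q0 :
  pp_transfer_on U p q -> (forall c, U (h c)) ->
  (forall c, p (h c) = p0 c) -> (forall c, q (h c) = q0 c) -> pp_transfer p0 q0.
Proof.
move=> Htr HU Hp Hq th Hth _ [eps Heps].
have Hth' := atom_conj_map_terms (map_param h) Hth.
have Hpar c : In_seq c (params (map_terms (map_param h) th)) -> U c.
  by case/(params_map_param Hth) => c0 <-.
have Hpow := proj2 (sat_map_param _ eps Hth Hp) Heps.
have [eps' Heps'] := Htr _ Hth' Hpar (ex_intro _ eps Hpow).
by exists eps'; rewrite -(sat_map_param _ _ Hth Hq).
Qed.

Lemma pp_transfer_on_preimage (C C' : Type) (h : C -> C') (U : C' -> Prop) p q p0 q0 :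
  pp_transfer p0 q0 -> (forall c, U c -> exists c0, h c0 = c) ->
  (forall c, p (h c) = p0 c) -> (forall c, q (h c) = q0 c) -> pp_transfer_on U p q.
Proof.
move=> Htr HU Hp Hq th Hth Hpar [eps Heps].
have [th0 Hth0 Eth] : exists2 th0, atom_conj th0 & map_terms (map_param h) th0 = th.
  apply: map_terms_preimage => // -[v|k|c] Hc; first by exists (TVar L C v).
    by exists (TConst C k).
  by have [c0 <-] := HU _ (Hpar _ (proj2 (In_params _ _) Hc)); exists (TParam L c0).
subst th; rewrite (sat_map_param _ _ Hth0 Hp) in Heps.
have [eps' Heps'] := Htr _ Hth0 (fun _ _ => I) (ex_intro _ eps Heps).
by exists eps'; rewrite (sat_map_param _ _ Hth0 Hq).
Qed.

Lemma pp_transfer_of_sentences (C : Type) p q : inhabited M ->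
  (forall phi : fml L C, pp phi -> sentence phi -> holds (power S) p phi -> holds S q phi) ->
  pp_transfer p q.
Proof.
move=> [m] Hpp th Hth _ [eps Heps].
have sentence_th : sentence (close_from 0 th) by move=> v /(fv_close_from Hth).
have holds_th : holds S q (close_from 0 th).
  apply: Hpp (pp_ex_close _ Hth) sentence_th _ => e0.
  by apply/(sat_close_from _ _ _ _ Hth); exists eps.
have [eps' _ Heps'] := proj1 (sat_close_from _ _ _ _ Hth) (holds_th (fun _ => m)).
by exists eps'.
Qed.

Lemma pp_type_merge (C : Type) (p : C -> nat -> M) (q : C -> M) d (l : seq (fml L C)) :
  (forall chi, In_seq chi l -> exists2 th, atom_conj th /\ chi = pp_type_formula th &
     exists eps, sat (power S) (oapp p d) eps th) ->
  exists2 th, atom_conj th /\ (exists eps, sat (power S) (oapp p d) eps th) &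
    forall m, (exists eps, sat S (oapp q m) eps th) ->
    forall chi, In_seq chi l -> sat S q (fun _ => m) chi.
Proof.
elim: l => [|chi l IH] Hl.
  exists (FEq (TVar L _ 0) (TVar L _ 0)) => [|m _ chi []].
  by split; [constructor|exists (fun _ => d)].
have [|Th [HTh HpowT] HrealT] := IH; first by move=> c Hc; apply: Hl; right.
have [th [Hth ->] Hpow] := Hl chi (or_introl erefl).
exists (conj_apart th Th).
  split; first by constructor=> //; exact: atom_conj_map_terms.
  by apply/sat_conj_apart.
move=> m /(sat_conj_apart _ _ Hth HTh)[Hm HmT] c [<-|/(HrealT m HmT)//].
exact/sat_pp_type_formula.
Qed.

Lemma pp_transfer_extend (C : Type) (p : C -> nat -> M) (q : C -> M) :
  saturated S -> card_lt C M -> pp_transfer p q ->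
  forall d, exists m, pp_transfer (oapp p d) (oapp q m).
Proof.
move=> [_ Msat] HC Htr d.
pose Sigma chi := exists2 th, atom_conj th /\ chi = pp_type_formula th &
  exists eps, sat (power S) (oapp p d) eps th.
have [m Hm] : exists m, forall chi, Sigma chi -> sat S q (fun _ => m) chi.
  apply: Msat HC _ _ => [chi [th [Hth ->] _] v|l Hl]; first exact: fv_pp_type_formula.
  have [th [Hth [eps Heps]] Hreal] := pp_type_merge q Hl.
  have Hth' := atom_conj_map_terms (@var0_of_none L C) Hth.
  have [|eps' Heps'] := Htr _ Hth' (fun _ _ => I).
    by exists (fun v => if v is v'.+1 then eps v' else d); rewrite sat_var0_of_none.
  by exists (eps' 0); apply: Hreal; exists (eps' \o succn); rewrite -sat_var0_of_none.
by exists m => th Hth _ Hpow; apply/sat_pp_type_formula => //; apply: Hm; exists th.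
Qed.

Lemma pp_transfer_on_chain (A E : Type) (R : E -> E -> Prop) (Q : E -> Prop)
    (p : A + E -> nat -> M) (q : A + E -> M) :
  (forall x y, R x y \/ R y x) -> (forall x y z, R x y -> R y z -> R x z) ->
  pp_transfer_on (inl_or (fun _ => False)) p q ->
  (forall y, Q y -> pp_transfer_on (inl_or (R ^~ y)) p q) ->
  pp_transfer_on (inl_or Q) p q.
Proof.
move=> R_total R_trans Hbase Hchain th Hth Hpar.
pose ys := pmap (fun c : A + E => if c is inr y then Some y else None) (params th).
have Hys y : In_seq y ys <-> In_seq (inr y) (params th).
  by rewrite In_seq_pmap; split=> [[[//|z] Hz [<-]]|]; last exists (inr y).
case: (EM (exists y, In_seq y ys)) => [ys_ne|noy].
  have [y0 /Hys/Hpar Qy0 Hmax] := seq_has_max R_total R_trans ys_ne.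
  by apply: Hchain Qy0 _ Hth _ => -[//|y /Hys/Hmax].
by apply: Hbase Hth _ => -[//|y /Hys Hy]; apply: noy; exists y.
Qed.

Lemma hom_of_pp_transfer (C : Type) (p : C -> nat -> M) (q : C -> M) :
  inhabited M -> pp_transfer p q -> (forall z, exists c, p c = z) ->
  exists f, hom (power S) S f /\ forall c, f (p c) = q c.
Proof.
move=> [m] Htr /(_ _)/cid p_onto; pose pre z := sval (p_onto z).
have p_pre z : p (pre z) = z by rewrite /pre; case: (p_onto z).
have eq_transfer c c' : p c = p c' -> q c = q c'.
  move=> pcc'; have [] := Htr (FEq (TParam L c) (TParam L c')) (ac_eq _ _) (fun _ _ => I).
    by exists (fun _ _ => m).
  by [].
exists (q \o pre); split; last by move=> c; apply: eq_transfer.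
split=> [R x Hx|k].
  have [] := Htr (FRel (fun i => TParam L (pre (x i)))) (ac_rel _) (fun _ _ => I) => //.
  exists (fun _ _ => m); change (rinterp (power S) (fun i => p (pre (x i)))).
  by rewrite (_ : (fun i => p (pre (x i))) = x) //; apply: funext.
pose th := FEq (TConst _ k) (TParam L (pre (fun _ => cinterp S k))).
have [] := Htr th (ac_eq _ _) (fun _ _ => I) => //.
by exists (fun _ _ => m) => /=; rewrite p_pre.
Qed.

End PPTransfer.

Section TransferAlongWellOrder.
Variables (L : signature) (M : Type) (S : structure L M).
Hypothesis S_saturated : saturated S.
Variables (A E : Type) (R : E -> E -> Prop).
Hypotheses (R_total : forall x y, R x y \/ R y x)
  (R_antisym : forall x y, R x y -> R y x -> x = y)
  (R_trans : forall x y z, R x y -> R y z -> R x z)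
  (R_least : forall P : E -> Prop, (exists x, P x) -> exists2 z, P z & forall x, P x -> R z x).
Variables (D : E -> Prop) (a : A -> nat -> M) (b : A -> M) (e : E -> nat -> M).
Hypotheses (D_down : forall x y, D x -> R y x -> D y)
  (D_small : forall x, D x -> card_lt (A + {y | strict R y x}) M)
  (e_onto : forall z, exists2 y, D y & e y = z)
  (ab_transfer : pp_transfer S a b).

Lemma strict_wf : well_founded (strict R).
Proof.
move=> x; case: (EM (Acc (strict R) x)) => [//|notAx]; exfalso.
have [z notAz z_least] := R_least (ex_intro (fun y => ~ Acc (strict R) y) x notAx).
apply: notAz; constructor=> y [Ryz yz]; case: (EM (Acc (strict R) y)) => [//|notAy].
by case: yz; exact: R_antisym _ _ Ryz (z_least y notAy).
Qed.

(* The value at [x] of a map [g] defined below [x]: a realisation in [S] of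
   the pp-type of [e x] over [a] and the [e y], [y] below [x]. *)
Definition extension_step x (g : forall y, strict R y x -> M) : M :=
  epsilon (saturated_inhabited S_saturated) (fun m =>
    pp_transfer S (oapp (sumf a (fun y : {y | strict R y x} => e (sval y))) (e x))
                  (oapp (sumf b (fun y : {y | strict R y x} => g (sval y) (svalP y))) m)).

Definition transfer_map : E -> M := Fix strict_wf (fun _ => M) extension_step.

Lemma transfer_map_eq x : transfer_map x = @extension_step x (fun y _ => transfer_map y).
Proof.
apply: (Fix_eq strict_wf (fun _ => M) extension_step) => y g g' gg'.
by rewrite (_ : g = g') //; apply: functional_extensionality_dep => z; apply: funext.
Qed.

Lemma transfer_map_empty :
  pp_transfer_on S (inl_or (fun _ => False)) (sumf a e) (sumf b transfer_map).
Proof.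
by apply: (pp_transfer_on_preimage (h := inl)) ab_transfer _ _ _ => // -[i|//]; exists i.
Qed.

Lemma transfer_map_below x :
  D x -> pp_transfer_on S (inl_or (R ^~ x)) (sumf a e) (sumf b transfer_map).
Proof.
elim/(well_founded_ind strict_wf): x => x IH Dx.
pose emb : A + {y | strict R y x} -> A + E := sumf inl (fun y => inr (sval y)).
have Hbelow : pp_transfer S (sumf a (fun y : {y | strict R y x} => e (sval y)))
                            (sumf b (fun y : {y | strict R y x} => transfer_map (sval y))).
  apply: (pp_transfer_comp (h := emb) (p := sumf a e) (q := sumf b transfer_map)
           (U := inl_or (strict R ^~ x))) => [|[//|[y]//]|[]|[]] //.
  apply: pp_transfer_on_chain transfer_map_empty _ => // y Ryx.
  by apply: IH Ryx (D_down Dx (proj1 Ryx)).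
have Hstep := pp_transfer_extend S_saturated (D_small Dx) Hbelow (e x).
have Hx : pp_transfer S (oapp (sumf a (fun y : {y | strict R y x} => e (sval y))) (e x))
    (oapp (sumf b (fun y : {y | strict R y x} => transfer_map (sval y))) (transfer_map x)).
  by rewrite transfer_map_eq; exact: epsilon_spec _ _ Hstep.
apply: (pp_transfer_on_preimage (h := oapp emb (inr x))) Hx _ _ _ => [|[[]|]|[[]|]] //.
case=> [i|y Ryx]; first by exists (Some (inl i)).
case: (EM (y = x)) => [->|yx]; first by exists None.
by exists (Some (inr (exist _ y (conj Ryx yx)))).
Qed.

Lemma transfer_map_spec : pp_transfer_on S (inl_or D) (sumf a e) (sumf b transfer_map).
Proof. exact: pp_transfer_on_chain transfer_map_empty (@transfer_map_below). Qed.

Lemma lift_hom_along_enumeration : exists f, hom (power S) S f /\ forall i, f (a i) = b i.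
Proof.
have Htr : pp_transfer S (sumf a (fun y : {y | D y} => e (sval y)))
                         (sumf b (fun y : {y | D y} => transfer_map (sval y))).
  apply: (pp_transfer_comp (h := sumf inl (fun y : {y | D y} => inr (sval y)))
           (p := sumf a e) (q := sumf b transfer_map) transfer_map_spec)
    => [[//|[]]|[]|[]] //.
have [|f [f_hom f_ab]] := hom_of_pp_transfer (saturated_inhabited S_saturated) Htr.
  by move=> z; have [y Dy <-] := e_onto z; exists (inr (exist _ y Dy)).
by exists f; split=> // i; exact: f_ab (inl i).
Qed.

End TransferAlongWellOrder.

Theorem lemma3 (L : signature) (M : Type) (S : structure L M) :
  saturated S ->
  (exists f : M -> (nat -> M), bijective f) ->
  hom_lifting S.
Proof.
move=> S_sat [F [G _ GF]] k a b ab_pp.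
have [R [R_total R_antisym R_trans R_least]] := well_order_exists M.
have [D [D_down [s s_onto] D_small]] := initial_segment_of_full_size R_antisym R_trans R_least.
apply: (lift_hom_along_enumeration S_sat R_total R_antisym R_trans R_least (e := F \o s) D_down).
- by move=> x /D_small; apply: card_lt_ord_sum; case: S_sat.
- by move=> z; have [y Dy sy] := s_onto (G z); exists y; rewrite //= sy GF.
- exact: pp_transfer_of_sentences (saturated_inhabited S_sat) ab_pp.
Qed.
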